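(* Let $\kappa<\Gamma$ be infinite cardinals, and let $K^{\kappa,\Gamma}$ be a compact space such that $C(K^{\kappa,\Gamma})$ is isometric to $X^{\kappa,\Gamma}$ via a linear isometry preserving pointwise multiplication and order. Then $C(K^{\kappa,\Gamma})$ is $\kappa$-complete, i.e. every subset of $C(K^{\kappa,\Gamma})$ of cardinality at most $\kappa$ which is bounded above has a supremum in $C(K^{\kappa,\Gamma})$ with respect to the pointwise order; nevertheless $C(K^{\kappa,\Gamma})$ fails the ball fixed point property.
   Context: $X^{\kappa,\Gamma}=\{f\in\ell_\infty(\Gamma):\exists A\subseteq\Gamma,\ |A|=\kappa,\ f|_{\Gamma\setminus A}\text{ is constant}\}$ with the sup norm, where $\ell_\infty(\Gamma)$ is the space of bounded real functions on $\Gamma$. $C(K)$ is the real Banach space of continuous functions on compact $K$ with the sup norm, ordered pointwise. A real Banach space $X$ has the ball fixed point property (BFPP) if every nonexpansive map $T\colon B_X\to B_X$ (i.e. $\|Tx-Ty\|\le\|x-y\|$) has a fixed point, where $B_X$ is the closed unit ball. *)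

From HB Require Import structures.
From mathcomp Require Import all_boot all_order all_algebra.
From mathcomp Require Import all_classical all_reals all_analysis.
Unset Printing Implicit Defensive.
Import Order.TTheory GRing.Theory Num.Theory numFieldNormedType.Exports.
Local Open Scope classical_set_scope.
Local Open Scope ring_scope.

Definition supnorm (R : realType) (T : Type) (f : T -> R) : R :=
  sup [set `|f x| | x in [set: T]].

Definition CK (R : realType) (K : topologicalType) : set (K -> R) :=
  [set f : K -> R | continuous f].

Definition Xkg (R : realType) (Kappa Gamma : Type) : set (Gamma -> R) :=
  [set f | (exists M : R, forall g, `|f g| <= M) /\
           exists (A : set Gamma) (c : R),
             (A #= [set: Kappa])%card /\ forall g, ~ A g -> f g = c].

Definition ptle (R : realType) (T : Type) (f g : T -> R) := forall x, f x <= g x.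

Definition kappa_complete (R : realType) (Kappa : Type) (K : topologicalType) :=
  forall S : set (K -> R), S `<=` CK R K -> S !=set0 ->
    (S #<= [set: Kappa])%card ->
    (exists u, CK R K u /\ forall f, S f -> ptle R K f u) ->
    exists s, CK R K s /\ (forall f, S f -> ptle R K f s) /\
      forall u, CK R K u -> (forall f, S f -> ptle R K f u) -> ptle R K s u.

Definition ballCK (R : realType) (K : topologicalType) : set (K -> R) :=
  [set f | CK R K f /\ supnorm R K f <= 1].

Definition CK_BFPP (R : realType) (K : topologicalType) :=
  forall F : (K -> R) -> (K -> R),
    (forall f, ballCK R K f -> ballCK R K (F f)) ->
    (forall f g, ballCK R K f -> ballCK R K g ->
       supnorm R K (F f - F g) <= supnorm R K (f - g)) ->
    exists f, ballCK R K f /\ F f = f.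

From HB Require Import structures.
From mathcomp Require Import all_boot all_order all_algebra.
From mathcomp Require Import all_classical all_reals all_analysis.
From mathcomp Require Import wochoice lra.
Import Order.TTheory GRing.Theory Num.Theory numFieldNormedType.Exports.
Local Open Scope classical_set_scope.
Local Open Scope ring_scope.

(* The one piece
   of cardinal arithmetic needed, |A * A| = |A| for infinite A, follows from
   the classical Zorn argument on partial pairing functions; hence a union of
   at most kappa sets of size at most kappa has size at most kappa.  So the
   pointwise supremum of at most kappa functions, each constant off a set of
   size at most kappa, is again of this kind, and C(K) inherits kappa-completeness
   through the order isomorphism T.

   For the ball fixed point property, well-order Gamma and choose two disjoint
   chains W1, W2 of order type kappa^+ (possible since |Gamma| > kappa).  Send
   x to the function equal to 1 (resp. -1) at the least point of W1 (resp. W2),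
   to the liminf of x from the left at the other points of W1 (resp. W2), and
   to x elsewhere.  This is a nonexpansive self-map of the unit ball of
   X^{kappa,Gamma}; it preserves X^{kappa,Gamma} because every subset of size
   at most kappa is bounded in W1 and in W2, and a fixed point would be 1 on W1
   and -1 on W2, which no function constant off a set of size at most kappa is.  Conjugating by T
   transports the map to the unit ball of C(K). *)

Definition embeds {T U} (A : set T) (B : set U) := exists f : T -> U,
  (forall x, A x -> B (f x)) /\ (forall x y, A x -> A y -> f x = f y -> x = y).

Lemma embeds_card_le {T U} {A : set T} {B : set U} : embeds A B -> (A #<= B)%card.
Proof.
move=> [f [fAB finj]].
have [g] : $|{injfun A >-> B}|.
  apply/injfunPex; exists f; first by move=> x Ax; exact: fAB.
  by move=> x y /set_mem Ax /set_mem Ay; exact: finj.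
exact: inj_card_le.
Qed.

Lemma card_le_embeds {T U} (u0 : U) {A : set T} {B : set U} :
  (A #<= B)%card -> embeds A B.
Proof.
move=> /card_leP [f].
pose h t := if pselect (A t) is left At then val (f (SigSub (mem_set At))) else u0.
exists h; split=> [x Ax|x y Ax Ay]; rewrite /h.
  by case: pselect => // At; exact: set_mem (valP (f (SigSub (mem_set At)))).
case: pselect => // At; case: pselect => // Ay' /val_inj /(@inj _ _ _ f).
by rewrite !inE => /(_ I I) /(congr1 val).
Qed.

Lemma embeds_trans {T U V} {A : set T} {B : set U} {C : set V} :
  embeds A B -> embeds B C -> embeds A C.
Proof.
move=> [f [fAB finj]] [g [gBC ginj]]; exists (g \o f).
split=> [x Ax|x y Ax Ay /ginj]; first exact/gBC/fAB.
by move=> /(_ (fAB _ Ax) (fAB _ Ay)); exact: finj.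
Qed.

Lemma embeds_sub {T} {A B : set T} : A `<=` B -> embeds A B.
Proof. by move=> AB; exists id. Qed.

Lemma embeds_setX {T T' U U'} {A : set T} {A' : set T'} {B : set U} {B' : set U'} :
  embeds A B -> embeds A' B' -> embeds (A `*` A') (B `*` B').
Proof.
move=> [f [fAB finj]] [f' [fAB' finj']]; exists (fun p => (f p.1, f' p.2)).
split=> [[a a'] [/= Aa Aa']|[a a'] [b b'] [/= Aa Aa'] [/= Ab Ab'] [/finj + /finj']].
  by split; [exact: fAB|exact: fAB'].
by move=> -> // ->.
Qed.

Lemma partial_choice {T U} (u0 : U) (P : T -> U -> Prop) :
  exists f : T -> U, forall x, (exists y, P x y) -> P x (f x).
Proof.
have /choice [f Hf] : forall x, exists y, (exists y, P x y) -> P x y.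
  move=> x; have [[y Pxy]|nP] := pselect (exists y, P x y); first by exists y.
  by exists u0.
by exists f.
Qed.

Section PartialBijections.
Context {T U : Type} (A : set T) (B : set U).

Definition partial_bijection (G : set (T * U)) := [/\ G `<=` A `*` B,
  forall a b b', G (a, b) -> G (a, b') -> b = b' &
  forall a a' b, G (a, b) -> G (a', b) -> a = a'].

Lemma partial_bijection_bigcup (F : set (set (T * U))) :
  F `<=` partial_bijection -> total_on F subset ->
  partial_bijection (\bigcup_(G in F) G).
Proof.
move=> Fpb Ftot.
split=> [p [G FG Gp]|a b b' [G FG Gab] [H FH Hab]|a a' b [G FG Gab] [H FH Hab]].
- by case: (Fpb G FG) => GAB _ _; exact: GAB.
- have [GH|HG] := Ftot G H FG FH.
    by case: (Fpb H FH) => _ + _; apply; [exact: GH Gab|].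
  by case: (Fpb G FG) => _ + _; apply; [|exact: HG Hab].
- have [GH|HG] := Ftot G H FG FH.
    by case: (Fpb H FH) => _ _; apply; [exact: GH Gab|].
  by case: (Fpb G FG) => _ _; apply; [|exact: HG Hab].
Qed.

Lemma embeds_of_partial_bijection (u0 : U) (G : set (T * U)) :
  partial_bijection G -> (forall a, A a -> exists b, G (a, b)) -> embeds A B.
Proof.
move=> [GAB Gfun Ginj] Gtot; have [f Hf] := partial_choice u0 (fun a b => G (a, b)).
exists f; split=> [a Aa|a a' Aa Aa' faa'].
  by have [] := GAB _ (Hf a (Gtot a Aa)).
apply: (Ginj a a' (f a)); first exact: Hf (Gtot a Aa).
by rewrite faa'; exact: Hf (Gtot a' Aa').
Qed.

End PartialBijections.

Lemma partial_bijection_swap {T U} {A : set T} {B : set U} {G : set (T * U)} :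
  partial_bijection A B G -> partial_bijection B A [set p | G (p.2, p.1)].
Proof.
move=> [GAB Gfun Ginj]; split=> [[b a] /GAB [] //|b a a'|b b' a].
- exact: Ginj.
- exact: Gfun.
Qed.

Lemma embeds_total {T U} (t0 : T) (u0 : U) (A : set T) (B : set U) :
  embeds A B \/ embeds B A.
Proof.
have [G [Gpb Gmax]] := Zorn_bigcup (@partial_bijection_bigcup _ _ A B).
have [Atot|] := pselect (forall a, A a -> exists b, G (a, b)).
  by left; exact: (embeds_of_partial_bijection _ _ u0 _ Gpb Atot).
move=> /existsNP [a0 /not_implyP [Aa0 /forallNP a0free]].
have [Btot|] := pselect (forall b, B b -> exists a, G (a, b)).
  right; apply: (embeds_of_partial_bijection _ _ t0 _ (partial_bijection_swap Gpb)).
  by move=> b /Btot [a Gab]; exists a.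
move=> /existsNP [b0 /not_implyP [Bb0 /forallNP b0free]].
have [GAB Gfun Ginj] := Gpb.
exfalso; apply: (Gmax (G `|` [set (a0, b0)])).
  split=> [p Gp|/(_ (a0, b0) (or_intror erefl))]; [by left|exact: a0free].
split=> [p [/GAB//|->//]|a b b'|a a' b].
- move=> [Gab|[? ?]] [Gab'|[? ?]]; subst; [exact: Gfun Gab Gab'|..|by []].
  + by case: (a0free _ Gab).
  + by case: (a0free _ Gab').
- move=> [Gab|[? ?]] [Gab'|[? ?]]; subst; [exact: Ginj Gab Gab'|..|by []].
  + by case: (b0free _ Gab).
  + by case: (b0free _ Gab').
Qed.

(** * |A * A| = |A| for infinite A *)

Section Hessenberg.
Context {T : Type} {A : set T} {e : nat -> T}.
Hypotheses (Ae : forall i, A (e i)) (e_inj : injective e).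

Definition pairing_dom (G : set ((T * T) * T)) : set T :=
  [set a | exists b c, G ((a, b), c)].
Local Notation dom := pairing_dom.

Let dom_sub {G H} : G `<=` H -> dom G `<=` dom H.
Proof. by move=> GH a [b [c Gabc]]; exists b, c; exact: GH. Qed.

Definition square_pairing (G : set ((T * T) * T)) := [/\ dom G `<=` A,
  G `<=` (dom G `*` dom G) `*` dom G,
  forall a b, dom G a -> dom G b -> exists c, G ((a, b), c),
  forall p c c', G (p, c) -> G (p, c') -> c = c' &
  forall p p' c, G (p, c) -> G (p', c) -> p = p'].

(* The seed forces the domain of a pairing to contain every [e i]. *)
Let seed : set ((T * T) * T) :=
  [set q | exists i j, q = ((e i, e j), e (pickle (i, j)))].

Let dom_seed a : dom seed a <-> exists i, a = e i.
Proof.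
split=> [[b [c [i [j [-> _ _]]]]]|[i ->]]; first by exists i.
by exists (e i), (e (pickle (i, i))), i, i.
Qed.

Let square_pairing_seed : square_pairing seed.
Proof.
split=> [a /dom_seed [i ->]//|_ [i [j ->]]|a b /dom_seed [i ->] /dom_seed [j ->]| |].
- by split; [split|]; apply/dom_seed; eexists.
- by exists (e (pickle (i, j))), i, j.
- move=> p c c' [i [j [-> ->]]] [i' [j' []]].
  by move=> /e_inj -> /e_inj -> ->.
- by move=> p p' c [i [j [-> ->]]] [i' [j' [-> /e_inj /(pcan_inj pickleK) [-> ->]]]].
Qed.

(* [set0] is allowed so that the union of the empty chain is admissible. *)
Let admissible G := G = set0 \/ seed `<=` G /\ square_pairing G.

Let admissible_bigcup (F : set (set ((T * T) * T))) :
  F `<=` admissible -> total_on F subset -> admissible (\bigcup_(G in F) G).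
Proof.
move=> Fadm Ftot; have [Fempty|] := pselect (forall G, F G -> G = set0).
  by left; apply/seteqP; split=> // q [G /Fempty -> //].
move=> /existsNP [G0 /not_implyP [FG0 G0n]].
have pairF G q : F G -> G q -> square_pairing G.
  by move=> FG Gq; case: (Fadm G FG) => [G0E|[]//]; rewrite G0E in Gq.
have supF G H : F G -> F H -> exists2 Z, F Z & G `<=` Z /\ H `<=` Z.
  move=> FG FH; have [GH|HG] := Ftot G H FG FH.
    by exists H => //; split=> //; exact: subset_refl.
  by exists G => //; split=> //; exact: subset_refl.
have domU a : dom (\bigcup_(G in F) G) a -> exists2 G, F G & dom G a.
  by move=> [b [c [G FG Gq]]]; exists G => //; exists b, c.
right; split.
  by case: (Fadm G0 FG0) => [//|[sG0 _] q /sG0 G0q]; exists G0.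
split=> [a /domU [G FG [b [c Gq]]]|[[a b] c] [G FG Gq]|
          a b /domU [G FG dGa] /domU [H FH dHb]|
          p c c' [G FG Gc] [H FH Hc]|p p' c [G FG Gc] [H FH Hc]].
- by case: (pairF G _ FG Gq) => + _ _ _ _; apply; exists b, c.
- have [_ + _ _ _] := pairF G _ FG Gq; move=> /(_ _ Gq) [[da db] dc].
  have GF : G `<=` \bigcup_(G in F) G by exact: bigcup_sup.
  by split; [split|]; exact: dom_sub GF _ _.
- have [Z FZ [GZ HZ]] := supF G H FG FH; have [b' [c' Zq]] := dom_sub GZ _ dGa.
  have [_ _ + _ _] := pairF Z _ FZ Zq.
  by move=> /(_ a b (dom_sub GZ _ dGa) (dom_sub HZ _ dHb)) [c Zc]; exists c, Z.
- have [Z FZ [GZ HZ]] := supF G H FG FH.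
  by have [_ _ _ + _] := pairF Z _ FZ (GZ _ Gc); apply; [exact: GZ Gc|exact: HZ Hc].
- have [Z FZ [GZ HZ]] := supF G H FG FH.
  by have [_ _ _ _ +] := pairF Z _ FZ (GZ _ Gc); apply; [exact: GZ Gc|exact: HZ Hc].
Qed.

Section Pairing.
Context {G : set ((T * T) * T)} {phi : T * T -> T}.
Hypotheses (pG : square_pairing G)
  (phiG : forall {a b}, dom G a -> dom G b -> G ((a, b), phi (a, b))).
Local Notation D := (dom G).

Lemma pairing_dom_sub : D `<=` A.
Proof. by case: pG. Qed.

Lemma pairing_fun_dom a b : D a -> D b -> D (phi (a, b)).
Proof. by move=> Da Db; case: pG => _ /(_ _ (phiG Da Db)) []. Qed.

Lemma pairing_fun_inj a b a' b' : D a -> D b -> D a' -> D b' ->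
  phi (a, b) = phi (a', b') -> a = a' /\ b = b'.
Proof.
move=> Da Db Da' Db' E; case: pG => _ _ _ _ /(_ _ _ _ (phiG Da Db)).
by rewrite E => /(_ _ (phiG Da' Db')) [-> ->].
Qed.

Lemma embeds_setX_pairing_dom : embeds (D `*` D) D.
Proof.
exists phi; split=> [[a b] [/= Da Db]|[a b] [a' b'] [/= Da Db] [/= Da' Db']].
  exact: pairing_fun_dom.
by move=> /pairing_fun_inj [] // -> ->.
Qed.

Hypothesis De : forall i, D (e i).

Lemma embeds_pairing_dom_of_diff : embeds (A `\` D) D -> embeds A D.
Proof.
move=> [k [kD k_inj]].
exists (fun a => if pselect (D a) then phi (a, e 0) else phi (k a, e 1)).
have kD' a : A a -> ~ D a -> D (k a) by move=> Aa nDa; exact: kD.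
split=> [a Aa|a a' Aa Aa'].
  by case: pselect => Da; apply: pairing_fun_dom => //; exact: kD'.
case: pselect => Da; case: pselect => Da' /pairing_fun_inj [] //; try exact: kD'.
- by move=> _ /e_inj.
- by move=> _ /e_inj.
- by move=> /k_inj ->.
Qed.

Section Extension.
Context {h g : T -> T}.
Hypotheses (hD : forall {d}, D d -> (A `\` D) (h d))
  (h_inj : forall {d d'}, D d -> D d' -> h d = h d' -> d = d')
  (g_id : forall {d}, D d -> g d = d) (g_h : forall {d}, D d -> g (h d) = d).
Local Notation E := (h @` D).
Local Notation DE x := (D x \/ E x).

(* A pair (x, y) outside D * D is coded by (g x, g y) in D * D together with
   a tag recording which of x, y lie in D, and then sent into h(D) by h. *)
Let tag x y := e (if pselect (D x) then 0 else if pselect (D y) then 1 else 2)%N.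
Let psi x y := h (phi (phi (g x, g y), tag x y)).
Let extension : set ((T * T) * T) := G `|`
  [set q | exists x y, [/\ DE x, DE y, ~ (D x /\ D y) & q = ((x, y), psi x y)]].

Let E_notD {x} : E x -> ~ D x.
Proof. by move=> [d Dd <-]; have [] := hD Dd. Qed.

Let g_dom {x} : DE x -> D (g x).
Proof. by move=> [Dx|[d Dd <-]]; [rewrite g_id|rewrite g_h]. Qed.

Let g_inj {x x'} : DE x -> DE x' -> (D x <-> D x') -> g x = g x' -> x = x'.
Proof.
move=> [Dx|[d Dd <-]] [Dx'|[d' Dd' <-]] xx'.
- by rewrite !g_id.
- by have := E_notD (imageP h Dd'); rewrite -xx'.
- by have := E_notD (imageP h Dd); rewrite xx'.
- by rewrite !g_h // => ->.
Qed.

Let tag_dom x y : D (tag x y).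
Proof. by rewrite /tag; case: pselect; case: pselect. Qed.

Let tag_inj {x y x' y'} : ~ (D x /\ D y) -> ~ (D x' /\ D y') ->
  tag x y = tag x' y' -> (D x <-> D x') /\ (D y <-> D y').
Proof.
rewrite /tag => nxy nxy' /e_inj.
by repeat case: pselect => ? //; tauto.
Qed.

Let psi_dom {x y} : DE x -> DE y -> D (phi (phi (g x, g y), tag x y)).
Proof.
by move=> Hx Hy; apply: pairing_fun_dom => //; exact: pairing_fun_dom (g_dom Hx) (g_dom Hy).
Qed.

Let psi_E {x y} : DE x -> DE y -> E (psi x y).
Proof. by move=> Hx Hy; exact/imageP/psi_dom. Qed.

Let psi_inj {x y x' y'} : DE x -> DE y -> DE x' -> DE y' ->
  ~ (D x /\ D y) -> ~ (D x' /\ D y') -> psi x y = psi x' y' -> x = x' /\ y = y'.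
Proof.
move=> Hx Hy Hx' Hy' nxy nxy' /(h_inj (psi_dom Hx Hy) (psi_dom Hx' Hy')).
move=> /pairing_fun_inj [] //; try exact: pairing_fun_dom (g_dom _) (g_dom _).
move=> /pairing_fun_inj [] //; try exact: g_dom.
move=> gx gy /(tag_inj nxy nxy') [Dxx' Dyy'].
by split; exact: g_inj.
Qed.

Let extension_dom a : dom extension a <-> DE a.
Proof.
split=> [[b [c [Gabc|[x [y [Hx _ _ []]]]]]]|[Da|Ea]].
- by left; exists b, c.
- by move=> -> _ _.
- by have [b [c Gabc]] := Da; exists b, c; left.
- exists a, (psi a a); right; exists a, a.
  by split; [right|right|move=> [/(E_notD Ea)]|].
Qed.

Let square_pairing_extension : square_pairing extension.
Proof.
have [GA Gdom Gtot Gfun Ginj] := pG.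
have Gcod p c : G (p, c) -> D c by move=> /Gdom [].
split=> [a /extension_dom [/GA//|[d Dd <-]]|[[a b] c]|
          a b /extension_dom Ha /extension_dom Hb| |].
- by have [] := hD Dd.
- move=> [/Gdom [[Da Db] Dc]|[x [y [Hx Hy _ [-> -> ->]]]]].
    by split; [split|]; apply/extension_dom; left.
  by split; [split|]; apply/extension_dom => //; right; exact: psi_E.
- have [[Da Db]|nab] := pselect (D a /\ D b).
    by have [c Gc] := Gtot a b Da Db; exists c; left.
  by exists (psi a b); right; exists a, b.
- move=> p c c' [Gc|[x [y [Hx Hy nxy [-> ->]]]]] [Gc'|[x' [y' [Hx' Hy' nxy' []]]]].
  + exact: Gfun Gc Gc'.
  + by move=> ? ?; subst; have [[Dx Dy] _] := Gdom _ Gc; case: nxy'.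
  + by have [[Dx Dy] _] := Gdom _ Gc'; case: nxy.
  + by move=> -> -> ->.
- move=> p p' c [Gc|[x [y [Hx Hy nxy [-> ->]]]]] [Gc'|[x' [y' [Hx' Hy' nxy' [-> E]]]]].
  + exact: Ginj Gc Gc'.
  + by subst c; case: (E_notD (psi_E Hx' Hy') (Gcod _ _ Gc)).
  + by case: (E_notD (psi_E Hx Hy) (Gcod _ _ Gc')).
  + by have [-> ->] := psi_inj Hx Hy Hx' Hy' nxy nxy' E.
Qed.

Lemma square_pairing_proper_extension : exists2 G', G `<` G' & square_pairing G'.
Proof.
exists extension => //; have E0 : E (h (e 0)) by exact: imageP.
pose x := h (e 0); split=> [q Gq|/(_ ((x, x), psi x x)) GN]; first by left.
apply: (E_notD E0); exists x, (psi x x); apply: GN; right; exists x, x.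
by split; [right|right|move=> [/(E_notD E0)]|].
Qed.

End Extension.
End Pairing.

(* For a maximal pairing with domain D: either A \ D embeds into D, and then so
   does A; or D embeds into A \ D, and the pairing extends. *)
Lemma embeds_setX_self : embeds (A `*` A) A.
Proof.
have [G [Gadm Gmax]] := Zorn_bigcup admissible_bigcup.
have [sG pG] : seed `<=` G /\ square_pairing G.
  case: Gadm => // G0; exfalso; apply: (Gmax seed); last by right; split.
  rewrite G0; split=> // /(_ ((e 0, e 0), e (pickle (0, 0)))%N); apply.
  by exists 0%N, 0%N.
pose D := dom G.
have De i : D (e i) by apply: (dom_sub sG); apply/dom_seed; exists i.
have [phi phiG] : exists phi, forall a b, D a -> D b -> G ((a, b), phi (a, b)).
  have [phi Hphi] := partial_choice (e 0) (fun p c => G (p, c)).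
  by exists phi => a b Da Db; apply: Hphi; case: pG => _ _ Gtot _ _; exact: Gtot.
suff AD : embeds A D.
  apply: embeds_trans (embeds_setX AD AD) _.
  exact: embeds_trans (embeds_setX_pairing_dom pG phiG) (embeds_sub (pairing_dom_sub pG)).
have [ADA|[h [hD h_inj]]] := embeds_total (e 0) (e 0) (A `\` D) D.
  exact: embeds_pairing_dom_of_diff pG phiG De ADA.
exfalso.
have [hinv hinvP] := partial_choice (e 0) (fun x d => D d /\ h d = x).
pose g x := if pselect (D x) then x else hinv x.
have g_id d : D d -> g d = d by rewrite /g; case: pselect.
have g_h d : D d -> g (h d) = d.
  move=> Dd; have [_ nDhd] := hD _ Dd.
  rewrite /g; case: pselect => [//|{}nDhd].
  have [Dd' hd'] := hinvP (h d) (ex_intro _ d (conj Dd erefl)).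
  exact: h_inj.
have [G' GG' pG'] := square_pairing_proper_extension pG phiG De hD h_inj g_id g_h.
apply: (Gmax G' GG'); right; split=> //.
exact: subset_trans sG (properW GG').
Qed.

End Hessenberg.

Section SmallSets.
Context {U : Type} {C : set U} {e : nat -> U}.
Hypotheses (Ce : forall i, C (e i)) (e_inj : injective e).

Lemma embeds_setU {T} {X Y : set T} : embeds X C -> embeds Y C -> embeds (X `|` Y) C.
Proof.
move=> [f [fC f_inj]] [g [gC g_inj]].
apply: embeds_trans _ (embeds_setX_self Ce e_inj).
exists (fun x => if pselect (X x) then (f x, e 0) else (g x, e 1)).
split=> [x XYx|x y XYx XYy]; case: pselect => Xx.
- by split; [exact: fC|exact: Ce].
- by split; [apply: gC; case: XYx|exact: Ce].
- by case: pselect => Xy /= [] //; [apply: f_inj|move=> _ /e_inj].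
- case: pselect => Xy /= [] //; first by move=> _ /e_inj.
  by apply: g_inj; [case: XYx|case: XYy].
Qed.

Lemma embeds_set1 {T} (x : T) : embeds [set x] C.
Proof. by exists (fun=> e 0); split=> // a b -> ->. Qed.

Lemma embeds_bigcup {I T} {J : set I} {F : I -> set T} :
  embeds J C -> (forall i, J i -> embeds (F i) C) -> embeds (\bigcup_(i in J) F i) C.
Proof.
move=> [iota [iotaC iota_inj]] FC.
have [[x0 [i0 Ji0 _]]|] := pselect (\bigcup_(i in J) F i !=set0); last first.
  move=> /forallNP U0; exists (fun=> e 0); split=> [x /U0|x y /U0] //.
have /choice [f Hf] : forall i, exists f : T -> U, J i ->
    (forall x, F i x -> C (f x)) /\ (forall x y, F i x -> F i y -> f x = f y -> x = y).
  move=> i; have [/FC [f Hf]|nJi] := pselect (J i); first by exists f.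
  by exists (fun=> e 0).
have [idx idxP] := partial_choice i0 (fun x i => J i /\ F i x).
have {}idxP x : (\bigcup_(i in J) F i) x -> J (idx x) /\ F (idx x) x.
  by move=> [i Ji Fix]; apply: idxP; exists i.
apply: embeds_trans _ (embeds_setX_self Ce e_inj).
exists (fun x => (iota (idx x), f (idx x) x)).
split=> [x /idxP [Ji Fix]|x y /idxP [Ji Fix] /idxP [Jj Fjy] [/iota_inj]].
  by split; [exact: iotaC|exact: (Hf _ Ji).1].
by move=> /(_ Ji Jj) E; rewrite -E in Fjy *; exact: (Hf _ Ji).2.
Qed.

Lemma embeds_enlarge {T} {S : set T} : embeds S C -> embeds C [set: T] ->
  exists A, [/\ S `<=` A, embeds A C & embeds C A].
Proof.
move=> SC [j [_ j_inj]]; exists (S `|` j @` C); split=> [x Sx||]; first by left.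
  apply: embeds_setU => //.
  have [jinv jinvP] := partial_choice (e 0) (fun y x => C x /\ j x = y).
  have {}jinvP x : C x -> C (jinv (j x)) /\ j (jinv (j x)) = j x.
    by move=> Cx; apply: jinvP; exists x.
  exists jinv; split=> [_ [x Cx <-]|_ _ [x Cx <-] [y Cy <-] E].
    by have [] := jinvP x Cx.
  by rewrite -(jinvP x Cx).2 -(jinvP y Cy).2 E.
by exists j; split=> [x Cx|x y Cx Cy /j_inj]; [right; exists x|apply].
Qed.

End SmallSets.

(** * A fixed-point-free nonexpansive map on a well-ordered set *)

Lemma well_order_exists (G : Type) : exists le : G -> G -> Prop,
  [/\ forall x y, le x y \/ le y x, forall x y, le x y -> le y x -> x = y &
      forall S : set G, S !=set0 -> exists2 z, S z & forall y, S y -> le z y].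
Proof.
elim/Peq : G => G; have [le le_wo] := well_ordering_principle G.
have le_min (S : set G) : S !=set0 -> exists2 z, S z & forall y, S y -> le z y.
  move=> [x Sx].
  have [z [[/asboolP Sz zmin] _]] := le_wo (fun t => `[< S t >]) (ex_intro _ x (asboolT Sx)).
  by exists z => // y Sy; apply: zmin; exact: asboolT.
have le_total x y : le x y \/ le y x.
  have [z [->|->] zmin] := le_min [set x; y] (ex_intro _ x (or_introl erefl)).
    by left; apply: zmin; right.
  by right; apply: zmin; left.
have le_anti x y : le x y -> le y x -> x = y.
  move=> lexy leyx; pose P t := `[< t = x \/ t = y >].
  have [z [_ zuniq]] := le_wo P (ex_intro _ x (asboolT (or_introl erefl))).
  have minP u : P u -> le u x -> le u y -> minimum_of le P u.
    by move=> Pu leux leuy; split=> [|t /asboolP [->|->]].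
  have lexx : le x x by case: (le_total x x).
  have leyy : le y y by case: (le_total y y).
  rewrite -(zuniq x (minP x (asboolT (or_introl erefl)) lexx lexy)).
  exact: zuniq (minP y (asboolT (or_intror erefl)) leyx leyy).
by exists (fun x y => le x y).
Qed.

Definition unit_bounded {R : realType} {T} (x : T -> R) := forall t, `|x t| <= 1.

Definition const_off_small {T U V} (C : set U) (x : T -> V) :=
  exists c (E : set T), embeds E C /\ forall t, ~ E t -> x t = c.

Section FixedPointFreeMap.
Variables (R : realType) (G : Type) (le : G -> G -> Prop).
Hypotheses (total_le : forall x y, le x y \/ le y x)
  (anti_le : forall x y, le x y -> le y x -> x = y)
  (least_le : forall S : set G, S !=set0 -> exists2 z, S z & forall y, S y -> le z y).
Local Notation lt a b := (le a b /\ a <> b).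

Let refl_le x : le x x. Proof. by case: (total_le x x). Qed.

Let norm1_bounds {r : R} : `|r| <= 1 -> -1 <= r /\ r <= 1.
Proof. by rewrite ler_norml => /andP. Qed.

Section Liminf.
Variable W : set G.

Definition inf_from (x : G -> R) (g a : G) : R :=
  inf [set x b | b in [set b | [/\ W b, le g b & lt b a]]].

Definition liminf_to (x : G -> R) (a : G) : R :=
  sup [set inf_from x g a | g in [set g | W g /\ lt g a]].

Lemma inf_from_le {x g a b} : unit_bounded x -> W b -> le g b -> lt b a ->
  inf_from x g a <= x b.
Proof.
move=> x1 Wb gb ba; apply: ge_inf; last by exists b.
by exists (-1) => _ [t _ <-]; have [] := norm1_bounds (x1 t).
Qed.

Lemma inf_from_norm {x g a} : unit_bounded x -> W g -> lt g a -> `|inf_from x g a| <= 1.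
Proof.
move=> x1 Wg ga; rewrite ler_norml; apply/andP; split.
  apply: lb_le_inf; first by exists (x g), g.
  by move=> _ [t _ <-]; have [] := norm1_bounds (x1 t).
apply: le_trans (inf_from_le x1 Wg (refl_le g) ga) _.
by have [] := norm1_bounds (x1 g).
Qed.

Lemma le_liminf_to {x g a} : unit_bounded x -> W g -> lt g a ->
  inf_from x g a <= liminf_to x a.
Proof.
move=> x1 Wg ga; apply: ub_le_sup; last by exists g.
exists 1 => _ [t [Wt ta] <-].
by have [] := norm1_bounds (inf_from_norm x1 Wt ta).
Qed.

Lemma liminf_to_le x a c : (exists2 g, W g & lt g a) ->
  (forall g, W g -> lt g a -> inf_from x g a <= c) -> liminf_to x a <= c.
Proof.
move=> [g Wg ga] xc; apply: ge_sup; first by exists (inf_from x g a), g.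
by move=> _ [t [Wt ta] <-]; exact: xc.
Qed.

Lemma liminf_to_norm x a : unit_bounded x -> (exists2 g, W g & lt g a) ->
  `|liminf_to x a| <= 1.
Proof.
move=> x1 [g Wg ga]; rewrite ler_norml; apply/andP; split.
  apply: le_trans (le_liminf_to x1 Wg ga).
  by have [] := norm1_bounds (inf_from_norm x1 Wg ga).
apply: liminf_to_le; first by exists g.
by move=> t Wt ta; have [] := norm1_bounds (inf_from_norm x1 Wt ta).
Qed.

Lemma liminf_to_lip x y a d : unit_bounded x -> unit_bounded y ->
  (forall b, `|x b - y b| <= d) -> (exists2 g, W g & lt g a) ->
  liminf_to x a <= liminf_to y a + d.
Proof.
move=> x1 y1 dxy ne; apply: liminf_to_le => // g Wg ga.
rewrite -lerBlDr; apply: le_trans (le_liminf_to y1 Wg ga).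
apply: lb_le_inf; first by exists (y g), g.
move=> _ [b [Wb gb ba] <-].
have := inf_from_le x1 Wb gb ba; have := ler_norm (x b - y b); have := dxy b.
lra.
Qed.

Lemma liminf_to_eventually x a c d : unit_bounded x -> W d -> lt d a ->
  (forall b, W b -> le d b -> lt b a -> x b = c) -> liminf_to x a = c.
Proof.
move=> x1 Wd da xc; apply/eqP; rewrite eq_le; apply/andP; split.
  apply: liminf_to_le; first by exists d.
  move=> g Wg ga; have [gd|dg] := total_le g d.
    by rewrite -(xc d) //; exact: inf_from_le.
  by rewrite -(xc g) //; exact: inf_from_le.
apply: le_trans (le_liminf_to x1 Wd da).
apply: lb_le_inf; first by exists (x d), d.
by move=> _ [b [Wb db ba] <-]; rewrite xc.
Qed.

End Liminf.
Arguments liminf_to_norm {W x a}.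
Arguments liminf_to_lip {W x y a d}.
Arguments liminf_to_eventually {W x a c d}.

Variables (U : Type) (C : set U) (e : nat -> U).
Hypotheses (Ce : forall i, C (e i)) (e_inj : injective e).

(* [W] has order type kappa^+, kappa being the cardinal of [C]. *)
Definition kappa_plus_chain (W : set G) := [/\ ~ embeds W C,
  forall d, W d -> embeds [set a | W a /\ le a d] C &
  forall E, embeds E C -> exists2 d, W d & forall a, E a -> W a -> lt a d].

Lemma exists_kappa_plus_chain {V : set G} :
  ~ embeds V C -> exists2 W, W `<=` V & kappa_plus_chain W.
Proof.
move=> V_large; pose W := [set a | V a /\ embeds [set b | V b /\ lt b a] C].
have W_segment d : W d -> embeds [set a | W a /\ le a d] C.
  move=> [Vd small_d].
  apply: embeds_trans _ (embeds_setU Ce e_inj small_d (embeds_set1 Ce d)).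
  apply: embeds_sub => a [[Va _] ad].
  by have [->|nad] := pselect (a = d); [right|left].
have W_large : ~ embeds W C.
  move=> W_small; apply: V_large.
  have [[a [Va nWa]]|VW] := pselect (exists a, V a /\ ~ W a); last first.
    apply: embeds_trans _ W_small; apply: embeds_sub => a Va.
    by apply: contrapT => nWa; apply: VW; exists a.
  have [a0 [Va0 nWa0] a0_min] := least_le [set a | V a /\ ~ W a] (ex_intro _ a (conj Va nWa)).
  exfalso; apply: nWa0; split => //; apply: embeds_trans _ W_small; apply: embeds_sub.
  move=> b [Vb [ba0 nba0]]; apply: contrapT => nWb.
  by apply: nba0; exact: anti_le ba0 (a0_min b (conj Vb nWb)).
exists W => [a []//|]; split => // E E_small.
apply: contrapT => no_bound; apply: W_large.
have cover : W `<=` \bigcup_(a in E `&` W) [set b | W b /\ le b a].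
  move=> d Wd; have /existsNP [a] : ~ forall a, E a -> W a -> lt a d.
    by move=> d_bound; apply: no_bound; exists d.
  move=> /not_implyP [Ea /not_implyP [Wa nad]].
  exists a => //; split => //; have [//|ad] := total_le d a.
  have [ead|nead] := pselect (a = d); first by rewrite ead.
  by case: nad.
apply: embeds_trans (embeds_sub cover) _.
apply: (embeds_bigcup Ce e_inj).
  by apply: embeds_trans _ E_small; apply: embeds_sub => a [].
by move=> a [_ Wa]; exact: W_segment.
Qed.

Section ChainValue.
Context {W : set G} {m : G} {v : R}.
Hypotheses (cW : kappa_plus_chain W) (Wm : W m) (m_min : forall g, W g -> le m g).

Definition chain_value (x : G -> R) (g : G) : R :=
  if pselect (g = m) then v else liminf_to W x g.

Let below_m {g} : W g -> g <> m -> exists2 h, W h & lt h g.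
Proof. by move=> Wg gm; exists m => //; split; [exact: m_min|move=> /esym]. Qed.

Lemma chain_value_norm x g : `|v| <= 1 -> unit_bounded x -> W g ->
  `|chain_value x g| <= 1.
Proof.
move=> v1 x1 Wg; rewrite /chain_value; case: pselect => gm //=.
exact: liminf_to_norm x1 (below_m Wg gm).
Qed.

Lemma chain_value_lip x y d g : unit_bounded x -> unit_bounded y ->
  (forall b, `|x b - y b| <= d) -> W g -> `|chain_value x g - chain_value y g| <= d.
Proof.
move=> x1 y1 dxy Wg; rewrite /chain_value; case: pselect => gm /=.
  by rewrite subrr normr0; apply: le_trans (dxy g).
have dyx b : `|y b - x b| <= d by rewrite distrC.
have := liminf_to_lip x1 y1 dxy (below_m Wg gm).
have := liminf_to_lip y1 x1 dyx (below_m Wg gm).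
by rewrite ler_norml; lra.
Qed.

Lemma chain_value_eventually x c E : unit_bounded x -> embeds E C ->
  (forall g, ~ E g -> x g = c) ->
  exists2 d, W d & forall g, W g -> ~ le g d -> chain_value x g = c.
Proof.
move=> x1 E_small xc; have [_ _ /(_ E E_small) [d Wd d_bound]] := cW.
exists d => // g Wg ngd; rewrite /chain_value; case: pselect => [gm|_] /=.
  by case: ngd; rewrite gm; apply: m_min.
have dg : lt d g.
  by have [//|dg] := total_le g d; split=> // dg'; apply: ngd; rewrite dg'.
apply: liminf_to_eventually x1 Wd dg _ => b Wb db _.
by apply: xc => Eb; have [bd /(_ (anti_le _ _ bd db))] := d_bound b Eb Wb.
Qed.

Lemma chain_value_fixed x : unit_bounded x ->
  (forall g, W g -> x g = chain_value x g) -> forall g, W g -> x g = v.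
Proof.
move=> x1 x_fix g Wg; apply: contrapT => xgv.
have [g0 [Wg0 xg0] g0_min] :=
  least_le [set g | W g /\ x g <> v] (ex_intro _ g (conj Wg xgv)).
have g0m : g0 <> m.
  by move=> g0m; apply: xg0; rewrite x_fix // /chain_value; case: pselect.
apply: xg0; rewrite x_fix // /chain_value; case: pselect => //= _.
apply: liminf_to_eventually x1 Wm _ _ => [|b Wb _ [bg0 nbg0]].
  by split; [exact: m_min|move=> /esym].
apply: contrapT => xbv; apply: nbg0; apply: anti_le _ _ bg0 _.
exact: g0_min.
Qed.

End ChainValue.

Section Map.
Variables (W1 W2 : set G) (m1 m2 : G).
Hypotheses (W12 : forall g, W1 g -> ~ W2 g)
  (cW1 : kappa_plus_chain W1) (cW2 : kappa_plus_chain W2)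
  (W1m1 : W1 m1) (W2m2 : W2 m2)
  (m1_min : forall g, W1 g -> le m1 g) (m2_min : forall g, W2 g -> le m2 g).

Definition liminf_map (x : G -> R) (g : G) : R :=
  if pselect (W1 g) then @chain_value W1 m1 1 x g
  else if pselect (W2 g) then @chain_value W2 m2 (-1) x g else x g.

Lemma liminf_map_unit x : unit_bounded x -> unit_bounded (liminf_map x).
Proof.
move=> x1 g; rewrite /liminf_map; case: pselect => W1g /=.
  by apply: chain_value_norm => //; rewrite normr1.
case: pselect => W2g //=.
by apply: chain_value_norm => //; rewrite normrN normr1.
Qed.

Lemma liminf_map_lip x y d : unit_bounded x -> unit_bounded y ->
  (forall b, `|x b - y b| <= d) -> forall g, `|liminf_map x g - liminf_map y g| <= d.
Proof.
move=> x1 y1 dxy g; rewrite /liminf_map; case: pselect => W1g /=.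
  by apply: chain_value_lip.
by case: pselect => W2g //=; apply: chain_value_lip.
Qed.

Lemma liminf_map_const_off x : unit_bounded x -> const_off_small C x ->
  const_off_small C (liminf_map x).
Proof.
move=> x1 [c [E [E_small xc]]].
have [d1 W1d1 xd1] := @chain_value_eventually W1 m1 1 cW1 m1_min x c E x1 E_small xc.
have [d2 W2d2 xd2] := @chain_value_eventually W2 m2 (-1) cW2 m2_min x c E x1 E_small xc.
have [_ small1 _] := cW1; have [_ small2 _] := cW2.
exists c, (E `|` [set a | W1 a /\ le a d1] `|` [set a | W2 a /\ le a d2]); split.
  exact (embeds_setU Ce e_inj
    (embeds_setU Ce e_inj E_small (small1 _ W1d1)) (small2 _ W2d2)).
move=> g nEg; rewrite /liminf_map; case: pselect => W1g /=.
  by apply: xd1 => // gd1; apply: nEg; left; right.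
case: pselect => W2g /=; first by apply: xd2 => // gd2; apply: nEg; right.
by apply: xc => Eg; apply: nEg; left; left.
Qed.

Lemma liminf_map_no_fixed x : unit_bounded x -> const_off_small C x ->
  liminf_map x <> x.
Proof.
move=> x1 [c [E [E_small xc]]] x_fix.
have x_W1 : forall g, W1 g -> x g = 1.
  apply: (@chain_value_fixed W1 m1 1) => // h W1h.
  by rewrite -{1}x_fix /liminf_map; case: pselect.
have x_W2 : forall g, W2 g -> x g = -1.
  apply: (@chain_value_fixed W2 m2 (-1)) => // h W2h.
  rewrite -{1}x_fix /liminf_map; case: pselect => [/W12//|nW1h].
  by case: pselect.
have c_eq W v : ~ embeds W C -> (forall g, W g -> x g = v) -> c = v.
  move=> W_large xv; apply: contrapT => cv; apply: W_large.
  apply: embeds_trans _ E_small; apply: embeds_sub => g Wg.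
  by apply: contrapT => nEg; apply: cv; rewrite -(xc g nEg) xv.
have [W1_large _ _] := cW1; have [W2_large _ _] := cW2.
have := c_eq _ _ W1_large x_W1; have := c_eq _ _ W2_large x_W2.
lra.
Qed.

End Map.

Lemma exists_fixed_point_free_map : ~ embeds [set: G] C -> embeds C [set: G] ->
  exists F : (G -> R) -> (G -> R),
  [/\ forall x, unit_bounded x -> unit_bounded (F x),
      forall x y d, unit_bounded x -> unit_bounded y ->
        (forall b, `|x b - y b| <= d) -> forall g, `|F x g - F y g| <= d,
      forall x, unit_bounded x -> const_off_small C x -> const_off_small C (F x) &
      forall x, unit_bounded x -> const_off_small C x -> F x <> x].
Proof.
move=> G_large [j [_ j_inj]]; pose eG i := j (e i).
have eG_inj : injective eG by move=> i i' /(j_inj _ _ (Ce i) (Ce i')) /e_inj.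
have [p [_ p_inj]] := @embeds_setX_self _ [set: G] eG (fun=> I) eG_inj.
have {}p_inj a b a' b' : p (a, b) = p (a', b') -> a = a' /\ b = b'.
  by move=> /(p_inj (a, b) (a', b') (conj I I) (conj I I)) [-> ->].
pose V k := [set p (g, eG k) | g in [set: G]].
have V_large k : ~ embeds (V k) C.
  move=> V_small; apply: G_large; apply: embeds_trans _ V_small.
  by exists (fun g => p (g, eG k)); split=> [g _|a b _ _ /p_inj []]; [exists g|].
have [W1 W1V cW1] := exists_kappa_plus_chain (V_large 0%N).
have [W2 W2V cW2] := exists_kappa_plus_chain (V_large 1%N).
have W12 g : W1 g -> ~ W2 g by move=> /W1V [a _ <-] /W2V [b _] /p_inj [_ /eG_inj].
have chain_min W : kappa_plus_chain W -> exists2 m, W m & forall g, W g -> le m g.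
  move=> [W_large _ _]; apply: least_le; apply: contrapT => /forallNP W0.
  by apply: W_large; exists (fun=> e 0); split=> // g ? /W0.
have [m1 W1m1 m1_min] := chain_min _ cW1; have [m2 W2m2 m2_min] := chain_min _ cW2.
exists (liminf_map W1 W2 m1 m2); split.
- by apply: liminf_map_unit.
- by apply: liminf_map_lip.
- by apply: liminf_map_const_off.
- by apply: liminf_map_no_fixed.
Qed.

End FixedPointFreeMap.

(** * X^{kappa,Gamma} and C(K) *)

Lemma normr_le_supnorm {R : realType} {T} {h : T -> R} (M : R) :
  (forall t, `|h t| <= M) -> forall t, `|h t| <= supnorm R T h.
Proof.
move=> hM t; apply: ub_le_sup; last by exists t.
by exists M => _ [s _ <-]; exact: hM.
Qed.

Lemma supnorm_le {R : realType} {T} {h : T -> R} (t0 : T) (M : R) :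
  (forall t, `|h t| <= M) -> supnorm R T h <= M.
Proof.
move=> hM; apply: ge_sup; first by exists `|h t0|, t0.
by move=> _ [t _ <-]; exact: hM.
Qed.

Section Xkg.
Context {R : realType} {Kappa Gamma : Type} {e : nat -> Kappa}.
Hypotheses (e_inj : injective e) (Kappa_Gamma : embeds [set: Kappa] [set: Gamma]).
Local Notation X := (Xkg R Kappa Gamma).

Lemma XkgP (h : Gamma -> R) :
  X h <-> (exists M, forall g, `|h g| <= M) /\ const_off_small [set: Kappa] h.
Proof.
split=> [[hM [A [c [/card_eqPle [/(card_le_embeds (e 0)) A_small _] hc]]]]|].
  by split=> //; exists c, A.
move=> [hM [c [E [E_small hc]]]]; split=> //.
have [A [EA A_small small_A]] := embeds_enlarge (fun=> I) e_inj E_small Kappa_Gamma.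
exists A, c; split; first by apply/card_eqPle; split; exact: embeds_card_le.
by move=> g nAg; apply: hc => Eg; apply: nAg; exact: EA.
Qed.

Lemma Xkg_sup (S : set (Gamma -> R)) : S `<=` X -> S !=set0 ->
  (S #<= [set: Kappa])%card -> (exists2 u, X u & forall f g, S f -> f g <= u g) ->
  X (fun g => sup [set f g | f in S]).
Proof.
move=> SX [f0 Sf0] /(card_le_embeds (e 0)) S_small [u Xu fu].
have /choice [supp supp_spec] : forall f, exists p : set Gamma * R, S f ->
    embeds p.1 [set: Kappa] /\ forall g, ~ p.1 g -> f g = p.2.
  move=> f; have [Sf|nSf] := pselect (S f); last by exists (set0, 0).
  have [_ [c [E [E_small fc]]]] := (XkgP f).1 (SX f Sf).
  by exists (E, c).
have sup_ge f g : S f -> f g <= sup [set f g | f in S].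
  by move=> Sf; apply: ub_le_sup; [exists (u g) => _ [h Sh <-]; exact: fu|exists f].
have sup_le g : sup [set f g | f in S] <= u g.
  by apply: ge_sup; [exists (f0 g), f0|move=> _ [f Sf <-]; exact: fu].
apply/XkgP; split.
  have [[M0 f0M] _] := (XkgP f0).1 (SX f0 Sf0); have [[Mu uM] _] := (XkgP u).1 Xu.
  exists (M0 + Mu) => g; have := f0M g; have := uM g.
  have := sup_ge f0 g Sf0; have := sup_le g.
  rewrite !ler_norml => ? ? /andP[? ?] /andP[? ?]; apply/andP; split.
  - have : 0 <= Mu by apply: le_trans (uM g).
    lra.
  - have : 0 <= M0 by apply: le_trans (f0M g).
    lra.
exists (sup [set (supp f).2 | f in S]), (\bigcup_(f in S) (supp f).1); split.
  apply: (embeds_bigcup (fun=> I) e_inj (F := fun f => (supp f).1) S_small).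
  by move=> f /supp_spec [].
move=> g nU; congr sup; apply/seteqP; split=> _ [f Sf <-]; exists f => //;
  rewrite (supp_spec f Sf).2 // => supp_g; apply: nU; by exists f.
Qed.

Let Gamma_nonempty : [set: Gamma] !=set0.
Proof. by have [j [/(_ (e 0) I) _ _]] := Kappa_Gamma; exists (j (e 0)). Qed.

Lemma Xkg_fixed_point_free : ~ embeds [set: Gamma] [set: Kappa] ->
  exists F : (Gamma -> R) -> (Gamma -> R),
  [/\ forall x, X x -> unit_bounded x -> X (F x) /\ unit_bounded (F x),
      forall x y, unit_bounded x -> unit_bounded y ->
        supnorm R Gamma (F x - F y) <= supnorm R Gamma (x - y) &
      forall x, X x -> unit_bounded x -> F x <> x].
Proof.
move=> Gamma_large; have [le [total_le anti_le least_le]] := well_order_exists Gamma.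
have [F [F1 Flip Fconst Ffix]] := @exists_fixed_point_free_map R Gamma le total_le anti_le
  least_le Kappa [set: Kappa] e (fun=> I) e_inj Gamma_large Kappa_Gamma.
have [g0 _] := Gamma_nonempty.
exists F; split=> [x /XkgP [_ xc] x1|x y x1 y1|x /XkgP [_ xc] x1].
- split; last exact: F1.
  by apply/XkgP; split; [exists 1; exact: F1|exact: Fconst].
- apply: (supnorm_le g0) => g; apply: Flip => // b.
  apply: (normr_le_supnorm 2 (h := x - y)) => t /=.
  by apply: le_trans (ler_normB _ _) _; have := x1 t; have := y1 t; lra.
- exact: Ffix.
Qed.

Section Transfer.
Context {K : topologicalType} {T : (K -> R) -> (Gamma -> R)}.
Hypotheses (Tin : forall {f}, CK R K f -> X (T f))
  (Tsurj : forall {h}, X h -> exists f, CK R K f /\ T f = h)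
  (Tlin : forall (a : R) f g, CK R K f -> CK R K g -> T (a *: f + g) = a *: T f + T g)
  (Tiso : forall {f}, CK R K f -> supnorm R Gamma (T f) = supnorm R K f)
  (Tord : forall f g, CK R K f -> CK R K g ->
     (ptle R K f g <-> ptle R Gamma (T f) (T g))).

Lemma CK_kappa_complete : kappa_complete R Kappa K.
Proof.
move=> S SCK [f0 Sf0] SK [u [CKu uS]].
have TuS f g : S f -> T f g <= T u g.
  by move=> Sf; exact: (Tord _ _ (SCK f Sf) CKu).1 (uS f Sf) g.
have Xs : X (fun g => sup [set h g | h in T @` S]).
  apply: Xkg_sup => [_ [f Sf <-]|||].
  - exact/Tin/SCK.
  - by exists (T f0), f0.
  - exact: card_le_trans (card_image_le T S) SK.
  - by exists (T u) => [|_ g [f Sf <-]]; [exact: Tin|exact: TuS].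
have [s [CKs Ts]] := Tsurj Xs.
exists s; split=> //; split=> [f Sf|v CKv vS].
  apply/(Tord _ _ (SCK f Sf) CKs); rewrite Ts => g.
  apply: ub_le_sup; last by exists (T f); [exists f|].
  by exists (T u g) => _ [_ [h Sh <-] <-]; exact: TuS.
apply/(Tord _ _ CKs CKv); rewrite Ts => g.
apply: ge_sup; first by exists (T f0 g), (T f0); [exists f0|].
by move=> _ [_ [f Sf <-] <-]; exact: (Tord _ _ (SCK f Sf) CKv).1 (vS f Sf) g.
Qed.

Let CK_sub f g : CK R K f -> CK R K g -> CK R K (f - g).
Proof. by move=> cf cg x; apply: continuousB; [exact: cf|exact: cg]. Qed.

Let T_sub f g : CK R K f -> CK R K g -> T (f - g) = T f - T g.
Proof.
by move=> cf cg; have := Tlin (-1) g f cg cf; rewrite !scaleN1r addrC [- T g + _]addrC.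
Qed.

Let ballCK_unit_bounded {f} : CK R K f -> ballCK R K f <-> unit_bounded (T f).
Proof.
move=> CKf; have [g0 _] := Gamma_nonempty; have [[M fM] _] := (XkgP (T f)).1 (Tin CKf).
split=> [[_ f1] g|Tf1].
  by apply: le_trans (normr_le_supnorm M fM g) _; rewrite Tiso.
by split=> //; rewrite -Tiso //; exact: supnorm_le g0 _ Tf1.
Qed.

Lemma CK_not_BFPP : ~ embeds [set: Gamma] [set: Kappa] -> ~ CK_BFPP R K.
Proof.
move=> Gamma_large BF; have [F [FX Flip Ffix]] := Xkg_fixed_point_free Gamma_large.
have [Tinv TinvP] := partial_choice (fun=> 0 : R) (fun h f => CK R K f /\ T f = h).
pose G f := Tinv (F (T f)).
have FT f : ballCK R K f -> X (F (T f)) /\ unit_bounded (F (T f)).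
  by move=> Bf; apply: FX (Tin Bf.1) _; exact/(ballCK_unit_bounded Bf.1).
have GT f : ballCK R K f -> CK R K (G f) /\ T (G f) = F (T f).
  by move=> /FT [/Tsurj XF _]; exact: TinvP.
have Gball f : ballCK R K f -> ballCK R K (G f).
  move=> Bf; have [CKG TG] := GT f Bf.
  by apply/(ballCK_unit_bounded CKG); rewrite TG; case: (FT f Bf).
have [|f [Bf Gf]] := BF G Gball.
  move=> f g Bf Bg; have [CKGf TGf] := GT f Bf; have [CKGg TGg] := GT g Bg.
  have [CKf CKg] := (Bf.1, Bg.1).
  rewrite -Tiso ?T_sub ?TGf ?TGg -?Tiso ?T_sub //; try exact: CK_sub.
  by apply: Flip; [apply/(ballCK_unit_bounded CKf)|apply/(ballCK_unit_bounded CKg)].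
apply: Ffix (Tin Bf.1) ((ballCK_unit_bounded Bf.1).1 Bf) _.
by rewrite -(GT f Bf).2 Gf.
Qed.

End Transfer.
End Xkg.

Theorem mainTheorem8 (R : realType) (Kappa Gamma : Type) (K : topologicalType)
  (T : (K -> R) -> (Gamma -> R)) :
  infinite_set [set: Kappa] ->
  ([set: Kappa] #<= [set: Gamma])%card ->
  ~ ([set: Gamma] #<= [set: Kappa])%card ->
  compact [set: K] -> hausdorff_space K ->
  (forall f, CK R K f -> Xkg R Kappa Gamma (T f)) ->
  (forall h, Xkg R Kappa Gamma h -> exists f, CK R K f /\ T f = h) ->
  (forall (a : R) f g, CK R K f -> CK R K g -> T (a *: f + g) = a *: T f + T g) ->
  (forall f, CK R K f -> supnorm R Gamma (T f) = supnorm R K f) ->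
  (forall f g, CK R K f -> CK R K g -> T (f \* g) = T f \* T g) ->
  (forall f g, CK R K f -> CK R K g -> (ptle R K f g <-> ptle R Gamma (T f) (T g))) ->
  kappa_complete R Kappa K /\ ~ CK_BFPP R K.
Proof.
move=> Kappa_inf Kappa_Gamma Gamma_large _ _ Tin Tsurj Tlin Tiso _ Tord.
have [k0 _] := infinite_setN0 Kappa_inf.
have [g0 _] : [set: Gamma] !=set0.
  by apply: infinite_setN0 => /(card_le_finite Kappa_Gamma).
have [e [_ e_inj]] := card_le_embeds k0 ((infiniteP _).1 Kappa_inf).
have {}e_inj : injective e by move=> i j /e_inj; apply.
have KG := card_le_embeds g0 Kappa_Gamma.
split; first exact: (CK_kappa_complete e_inj KG Tin Tsurj Tord).
by apply: (CK_not_BFPP e_inj KG Tin Tsurj Tlin Tiso) => /embeds_card_le.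
Qed.
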